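(* Let $\mu_1,\mu_2>0$ with $\mu_1+\mu_2=1$ and $\mu_1\le\mu_2$. Put $$e=\frac{\sqrt{(\mu_1/\mu_2)^4+8(\mu_1/\mu_2)^2}-(\mu_1/\mu_2)^2}{4},\qquad \sigma=\sigma(\mu_1,\mu_2)=-\frac{(1-e^2)(\mu_1^2+\mu_2^2e)^2}{2\mu_2e^2}.$$ Consider the planar orbital dynamics described in the context, started from two intersecting elliptic co-focal Keplerian orbits $o_1,o_2$ with $E<0$. If initially $EL^2<\sigma$, then for every possible evolution (every choice of collision points, impact directions $\mathbf n$ and number of collisions) the orbits remain elliptic for all times. Moreover, along every evolution $|L_1|$ and $|L_2|$ stay bounded and $e_i\le c_i<1$ ($i=1,2$) for suitable constants $c_1,c_2$.
   Context: Units are chosen so that a particle at position $\mathbf x\in\mathbb R^2\setminus\{0\}$ undergoes Keplerian motion about the origin with acceleration $-\mathbf x/|\mathbf x|^3$. For a particle $i$ at position $\mathbf x_i$ with velocity $\mathbf v_i$, its specific energy is $E_i=|\mathbf v_i|^2/2-1/|\mathbf x_i|$, its (signed) specific angular momentum is $L_i=x_{i,1}v_{i,2}-x_{i,2}v_{i,1}$, and its eccentricity is $e_i=\sqrt{1+2E_iL_i^2}$; these are constant along the Keplerian orbit $o_i$ determined by $(\mathbf x_i,\mathbf v_i)$, which is elliptic iff $E_i<0$. Two point particles have masses $m_1,m_2$, $M=m_1+m_2$, $\mu_i=m_i/M$. Set $E=\mu_1E_1+\mu_2E_2$ and $L=\mu_1L_1+\mu_2L_2$. Orbital dynamics: the state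 is a pair of coplanar Keplerian orbits $o_1,o_2$ with common focus at the origin that intersect. One step: choose a point $\mathbf x$ of $o_1\cap o_2$; let $\mathbf v_1,\mathbf v_2$ be the velocities of particles moving on $o_1,o_2$ when at $\mathbf x$; choose a unit vector $\mathbf n$ with $\mathbf n\cdot\mathbf w<0$ where $\mathbf w=\mathbf v_1-\mathbf v_2$; set $\mathbf w'=(I-\mathbf n\otimes\mathbf n)\mathbf w-(1-2\varepsilon)(\mathbf n\otimes\mathbf n)\mathbf w$ with inelasticity parameter $\varepsilon\in[0,1/2]$ ($\varepsilon=0$: elastic collision), where $(\mathbf n\otimes\mathbf n)\mathbf w=(\mathbf n\cdot\mathbf w)\mathbf n$; with $\mathbf v=\mu_1\mathbf v_1+\mu_2\mathbf v_2$ set $\mathbf v_1'=\mathbf v+\mu_2\mathbf w'$, $\mathbf v_2'=\mathbf v-\mu_1\mathbf w'$. The new orbits $o_1',o_2'$ are the Keplerian orbits through $\mathbf x$ with velocities $\mathbf v_1',\mathbf v_2'$. Steps are iterated arbitrarily. The total $L$ is conserved and $E$ does not increase at each step. *)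

From Stdlib Require Import Reals.
From Coquelicot Require Import Coquelicot.
Open Scope R_scope.

Definition vec := (R * R)%type.
Definition dot (a b : vec) : R := fst a * fst b + snd a * snd b.
Definition vnorm (a : vec) : R := sqrt (dot a a).
Definition vadd (a b : vec) : vec := (fst a + fst b, snd a + snd b).
Definition vsub (a b : vec) : vec := (fst a - fst b, snd a - snd b).
Definition vscale (c : R) (a : vec) : vec := (c * fst a, c * snd a).

Definition energy (x v : vec) : R := dot v v / 2 - 1 / vnorm x.
Definition angmom (x v : vec) : R := fst x * snd v - snd x * fst v.
Definition ecc (x v : vec) : R := sqrt (1 + 2 * energy x v * (angmom x v) ^ 2).

Definition kepler_solution (y1 y2 u1 u2 : R -> R) (a b : R) : Prop :=
  forall t, a < t < b ->
    (y1 t, y2 t) <> (0, 0) /\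
    is_derive y1 t (u1 t) /\ is_derive y2 t (u2 t) /\
    is_derive u1 t (- y1 t / (vnorm (y1 t, y2 t)) ^ 3) /\
    is_derive u2 t (- y2 t / (vnorm (y1 t, y2 t)) ^ 3).

(* The Keplerian orbit determined by (x,v), as a set of phase points:
   [on_orbit x v y u] means a particle moving on that orbit is at position y
   with velocity u at some time.  The orbit (as a curve) is the set of such y,
   and u is "the velocity of a particle moving on the orbit when at y". *)
Definition on_orbit (x v : vec) (y u : vec) : Prop :=
  exists (a b t : R) (y1 y2 u1 u2 : R -> R),
    a < 0 < b /\ a < t < b /\ kepler_solution y1 y2 u1 u2 a b /\
    (y1 0, y2 0) = x /\ (u1 0, u2 0) = v /\
    (y1 t, y2 t) = y /\ (u1 t, u2 t) = u.

(* A state: the orbits o1, o2 are represented by phase points (x_i, v_i). *)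
Record state := mkState { x1 : vec; v1 : vec; x2 : vec; v2 : vec }.

Definition En1 (s : state) := energy (x1 s) (v1 s).
Definition En2 (s : state) := energy (x2 s) (v2 s).
Definition Lm1 (s : state) := angmom (x1 s) (v1 s).
Definition Lm2 (s : state) := angmom (x2 s) (v2 s).
Definition ecc1 (s : state) := ecc (x1 s) (v1 s).
Definition ecc2 (s : state) := ecc (x2 s) (v2 s).
Definition Etot (mu1 mu2 : R) (s : state) := mu1 * En1 s + mu2 * En2 s.
Definition Ltot (mu1 mu2 : R) (s : state) := mu1 * Lm1 s + mu2 * Lm2 s.

Definition orbits_intersect (s : state) : Prop :=
  exists y u1 u2, on_orbit (x1 s) (v1 s) y u1 /\ on_orbit (x2 s) (v2 s) y u2.

Definition collision_step (mu1 mu2 eps : R) (s s' : state) : Prop :=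
  exists (y u1 u2 n : vec),
    on_orbit (x1 s) (v1 s) y u1 /\ on_orbit (x2 s) (v2 s) y u2 /\
    dot n n = 1 /\ dot n (vsub u1 u2) < 0 /\
    let w := vsub u1 u2 in
    let w' := vsub (vsub w (vscale (dot n w) n))
                   (vscale (1 - 2 * eps) (vscale (dot n w) n)) in
    let v := vadd (vscale mu1 u1) (vscale mu2 u2) in
    s' = mkState y (vadd v (vscale mu2 w')) y (vsub v (vscale mu1 w')).

Inductive reachable (mu1 mu2 eps : R) (s0 : state) : state -> Prop :=
  | reach_refl : reachable mu1 mu2 eps s0 s0
  | reach_step : forall s s', reachable mu1 mu2 eps s0 s ->
      collision_step mu1 mu2 eps s s' -> reachable mu1 mu2 eps s0 s'.

Definition e_crit (mu1 mu2 : R) : R :=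
  let r := mu1 / mu2 in (sqrt (r ^ 4 + 8 * r ^ 2) - r ^ 2) / 4.

Definition sigma_crit (mu1 mu2 : R) : R :=
  let e := e_crit mu1 mu2 in
  - ((1 - e ^ 2) * (mu1 ^ 2 + mu2 ^ 2 * e) ^ 2) / (2 * mu2 * e ^ 2).

From Stdlib Require Import Reals Lra.
From Coquelicot Require Import Coquelicot.
Open Scope R_scope.

(* Energy and angular momentum are conserved along Kepler orbits, and a collision keeps the
   total angular momentum L and does not raise the total energy E < 0; so E L^2 never
   increases, and after each collision both orbits pass through the collision point.  At a
   common point at distance r, rescaling the velocities by sqrt r leaves E L^2 unchanged and
   makes it a function of the scaled velocities alone.  Where one particle is unbound, or moves
   radially, this function is at least sigma(mu1, mu2), the minimum over s >= 0 of the profile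
   2 mu2 (s^2 - 1) (mu1 + mu2 s)^2; hence E L^2 < sigma keeps both particles bound.  A
   perturbation argument makes this quantitative, E_i L_i^2 <= - (sigma - E L^2)^3 / 1600,
   which keeps the eccentricities away from 1, while r |E| <= 1 gives L_i^2 <= 2 / |E|. *)

(** * Conservation laws *)

Lemma is_derive_zero_const (f : R -> R) (a b t : R) :
  (forall s, a < s < b -> is_derive f s 0) -> a < 0 < b -> a < t < b -> f t = f 0.
Proof.
  intros Hd H0 Ht.
  assert (Hin : forall s, Rmin 0 t <= s <= Rmax 0 t -> a < s < b)
    by (intros s Hs; unfold Rmin, Rmax in Hs; destruct (Rle_dec 0 t); lra).
  destruct (MVT_gen f 0 t (fun _ => 0)) as [c [_ Hc]].
  - intros s Hs. apply Hd, Hin. lra.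
  - intros s Hs. apply continuity_pt_filterlim.
    apply (ex_derive_continuous (K := R_AbsRing) (V := R_NormedModule)).
    exists 0. apply Hd, Hin. exact Hs.
  - lra.
Qed.

Lemma sum_sq_pos (p q : R) : (p, q) <> (0, 0) -> 0 < p * p + q * q.
Proof.
  intros Hpq. destruct (Req_dec p 0) as [-> | Hp].
  - destruct (Req_dec q 0) as [-> | Hq]; [congruence | nra].
  - nra.
Qed.

Section KeplerConservation.

Variables (y1 y2 u1 u2 : R -> R) (a b : R).
Hypothesis Hkepler : kepler_solution y1 y2 u1 u2 a b.

Let q t := y1 t * y1 t + y2 t * y2 t.

Lemma kepler_Derive t : a < t < b ->
  0 < q t /\
  Derive y1 t = u1 t /\ Derive y2 t = u2 t /\
  Derive u1 t = - y1 t / sqrt (q t) ^ 3 /\ Derive u2 t = - y2 t / sqrt (q t) ^ 3 /\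
  ex_derive y1 t /\ ex_derive y2 t /\ ex_derive u1 t /\ ex_derive u2 t.
Proof.
  intros Ht. destruct (Hkepler t Ht) as (Hnz & D1 & D2 & D3 & D4).
  unfold vnorm, dot in D3, D4; simpl in D3, D4.
  repeat split; try (apply is_derive_unique; assumption);
    try (eexists; eassumption).
  apply sum_sq_pos, Hnz.
Qed.

Lemma kepler_energy_const t : a < 0 < b -> a < t < b ->
  energy (y1 t, y2 t) (u1 t, u2 t) = energy (y1 0, y2 0) (u1 0, u2 0).
Proof.
  intros H0 Ht. unfold energy, vnorm, dot; simpl.
  apply (is_derive_zero_const
    (fun s => (u1 s * u1 s + u2 s * u2 s) / 2 - 1 / sqrt (q s)) a b t); auto.
  intros s Hs. unfold q.
  destruct (kepler_Derive s Hs) as (Hq & D1 & D2 & D3 & D4 & ?).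
  assert (0 < sqrt (q s)) by (apply sqrt_lt_R0; lra).
  auto_derive; change (fun x => y1 x) with y1; change (fun x => y2 x) with y2;
    change (fun x => u1 x) with u1; change (fun x => u2 x) with u2.
  - unfold q in *. repeat split; try tauto; lra.
  - rewrite D1, D2, D3, D4. fold (q s). field. lra.
Qed.

Lemma kepler_angmom_const t : a < 0 < b -> a < t < b ->
  angmom (y1 t, y2 t) (u1 t, u2 t) = angmom (y1 0, y2 0) (u1 0, u2 0).
Proof.
  intros H0 Ht. unfold angmom; simpl.
  apply (is_derive_zero_const (fun s => y1 s * u2 s - y2 s * u1 s) a b t); auto.
  intros s Hs.
  destruct (kepler_Derive s Hs) as (Hq & D1 & D2 & D3 & D4 & ?).
  assert (0 < sqrt (q s)) by (apply sqrt_lt_R0; lra).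
  auto_derive; change (fun x => y1 x) with y1; change (fun x => y2 x) with y2;
    change (fun x => u1 x) with u1; change (fun x => u2 x) with u2.
  - tauto.
  - rewrite D1, D2, D3, D4. field. lra.
Qed.

End KeplerConservation.

Lemma on_orbit_conserved (x v y u : vec) : on_orbit x v y u ->
  y <> (0, 0) /\ energy y u = energy x v /\ angmom y u = angmom x v.
Proof.
  intros (a & b & t & y1 & y2 & u1 & u2 & Hab & Ht & Hk & Hx & Hv & Hy & Hu).
  subst x v y u. split; [apply (Hk t Ht) | split].
  - apply (kepler_energy_const y1 y2 u1 u2 a b); assumption.
  - apply (kepler_angmom_const y1 y2 u1 u2 a b); assumption.
Qed.

Definition post_collision (mu1 mu2 eps : R) (y u1 u2 n : vec) : state :=
  let w := vsub u1 u2 in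
  let w' := vsub (vsub w (vscale (dot n w) n)) (vscale (1 - 2 * eps) (vscale (dot n w) n)) in
  let v := vadd (vscale mu1 u1) (vscale mu2 u2) in
  mkState y (vadd v (vscale mu2 w')) y (vsub v (vscale mu1 w')).

Section Collision.

Variables (mu1 mu2 eps : R) (y u1 u2 n : vec).
Hypothesis H12 : mu1 + mu2 = 1.

Lemma Ltot_post_collision :
  Ltot mu1 mu2 (post_collision mu1 mu2 eps y u1 u2 n) = mu1 * angmom y u1 + mu2 * angmom y u2.
Proof.
  replace mu2 with (1 - mu1) by lra.
  destruct y, u1, u2, n. unfold Ltot, Lm1, Lm2, post_collision, angmom; simpl.
  unfold dot, vadd, vsub, vscale; simpl. ring.
Qed.

(* Kinetic energy drops by mu1 mu2 (|w|^2 - |w'|^2) / 2, and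
   |w'|^2 = |w|^2 - 4 eps (1 - eps) (n.w)^2 for a unit vector n. *)
Lemma Etot_post_collision : dot n n = 1 ->
  Etot mu1 mu2 (post_collision mu1 mu2 eps y u1 u2 n) =
  mu1 * energy y u1 + mu2 * energy y u2
  - 2 * mu1 * mu2 * eps * (1 - eps) * dot n (vsub u1 u2) ^ 2.
Proof.
  intros Hn. replace mu2 with (1 - mu1) by lra.
  destruct y as [y1 y2], u1 as [p1 q1], u2 as [p2 q2], n as [n1 n2].
  unfold Etot, En1, En2, post_collision, energy; simpl.
  unfold dot, vadd, vsub, vscale in *; simpl in *.
  set (c := 1 / vnorm (y1, y2)).
  set (nw := n1 * (p1 - p2) + n2 * (q1 - q2)).
  transitivity ((mu1 * ((p1 * p1 + q1 * q1) / 2 - c) + (1 - mu1) * ((p2 * p2 + q2 * q2) / 2 - c))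
    - 2 * mu1 * (1 - mu1) * eps * (1 - eps) * nw ^ 2
    + 2 * mu1 * (1 - mu1) * (1 - eps) ^ 2 * nw ^ 2 * (n1 * n1 + n2 * n2 - 1));
    [unfold nw; clearbody c; field | rewrite Hn; ring].
Qed.

End Collision.

(* Only the conserved quantities of the two orbits are recorded. *)
Definition orbits_meet_at (s : state) (y u1 u2 : vec) : Prop :=
  y <> (0, 0) /\ En1 s = energy y u1 /\ En2 s = energy y u2 /\
  Lm1 s = angmom y u1 /\ Lm2 s = angmom y u2.

Lemma orbits_intersect_meet (s : state) : orbits_intersect s ->
  exists y u1 u2, orbits_meet_at s y u1 u2.
Proof.
  intros (y & u1 & u2 & O1 & O2).
  destruct (on_orbit_conserved _ _ _ _ O1) as (Hy & E1 & L1).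
  destruct (on_orbit_conserved _ _ _ _ O2) as (_ & E2 & L2).
  exists y, u1, u2. unfold orbits_meet_at, En1, En2, Lm1, Lm2. auto.
Qed.

Section Dynamics.

Variables mu1 mu2 eps : R.
Hypotheses (H1 : 0 < mu1) (H2 : 0 < mu2) (H12 : mu1 + mu2 = 1) (Heps : 0 <= eps <= 1 / 2).

Lemma collision_step_invariants (s s' : state) : collision_step mu1 mu2 eps s s' ->
  Etot mu1 mu2 s' <= Etot mu1 mu2 s /\ Ltot mu1 mu2 s' = Ltot mu1 mu2 s /\
  exists y u1 u2, orbits_meet_at s' y u1 u2.
Proof.
  intros (y & u1 & u2 & n & O1 & O2 & Hn & _ & Hs').
  change (s' = post_collision mu1 mu2 eps y u1 u2 n) in Hs'.
  destruct (on_orbit_conserved _ _ _ _ O1) as (Hy & E1 & L1).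
  destruct (on_orbit_conserved _ _ _ _ O2) as (_ & E2 & L2).
  assert (HE : Etot mu1 mu2 s = mu1 * energy y u1 + mu2 * energy y u2)
    by (unfold Etot, En1, En2; rewrite E1, E2; reflexivity).
  assert (HL : Ltot mu1 mu2 s = mu1 * angmom y u1 + mu2 * angmom y u2)
    by (unfold Ltot, Lm1, Lm2; rewrite L1, L2; reflexivity).
  rewrite HE, HL, Hs', Etot_post_collision, Ltot_post_collision by assumption.
  split; [| split; [reflexivity |]].
  - assert (0 <= mu1 * mu2 * eps * (1 - eps) * dot n (vsub u1 u2) ^ 2).
    { apply Rmult_le_pos; [| apply pow2_ge_0].
      repeat apply Rmult_le_pos; lra. }
    lra.
  - exists y, (v1 (post_collision mu1 mu2 eps y u1 u2 n)),
      (v2 (post_collision mu1 mu2 eps y u1 u2 n)).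
    repeat split; assumption.
Qed.

Lemma reachable_invariants (s0 s : state) : orbits_intersect s0 ->
  reachable mu1 mu2 eps s0 s ->
  Etot mu1 mu2 s <= Etot mu1 mu2 s0 /\ Ltot mu1 mu2 s = Ltot mu1 mu2 s0 /\
  exists y u1 u2, orbits_meet_at s y u1 u2.
Proof.
  intros Hint Hr. induction Hr as [| s s' _ IH Hst].
  - split; [lra | split; [reflexivity | apply orbits_intersect_meet, Hint]].
  - destruct IH as (IE & IL & _).
    destruct (collision_step_invariants s s' Hst) as (HE & HL & Hmeet).
    split; [lra | split; [congruence | exact Hmeet]].
Qed.

End Dynamics.

(** * Scaled coordinates at a common point *)

(* Velocities at a point at distance r, rescaled by sqrt r: [scaled_a] is the scaled angular
   momentum and [scaled_b] the scaled radial velocity, and [scaled_energy] becomes r times the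
   energy. The scaling leaves E L^2 unchanged. *)
Definition scaled_a (y u : vec) : R := angmom y u / sqrt (vnorm y).
Definition scaled_b (y u : vec) : R := dot y u / sqrt (vnorm y).

Definition scaled_energy (a b : R) : R := (a ^ 2 + b ^ 2) / 2 - 1.
Definition pair_energy (m n a1 b1 a2 b2 : R) : R :=
  m * scaled_energy a1 b1 + n * scaled_energy a2 b2.
Definition pair_angmom (m n a1 a2 : R) : R := m * a1 + n * a2.

Lemma dot_self_nonneg (a : vec) : 0 <= dot a a.
Proof. destruct a. unfold dot; simpl. nra. Qed.

Lemma vnorm_pos (y : vec) : y <> (0, 0) -> 0 < vnorm y.
Proof. destruct y. intros Hy. apply sqrt_lt_R0, sum_sq_pos, Hy. Qed.

Lemma lagrange_identity (y u : vec) : angmom y u ^ 2 + dot y u ^ 2 = dot y y * dot u u.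
Proof. destruct y, u. unfold angmom, dot; simpl. ring. Qed.

Section ScaledCoordinates.

Variable y : vec.
Hypothesis Hy : y <> (0, 0).

Lemma sqrt_vnorm_pos : 0 < sqrt (vnorm y).
Proof. apply sqrt_lt_R0, vnorm_pos, Hy. Qed.

Lemma sqrt_vnorm_sq : sqrt (vnorm y) * sqrt (vnorm y) = vnorm y.
Proof. apply sqrt_sqrt, Rlt_le, vnorm_pos, Hy. Qed.

Lemma scaled_energy_at (u : vec) :
  scaled_energy (scaled_a y u) (scaled_b y u) = vnorm y * energy y u.
Proof.
  assert (Hrr : vnorm y * vnorm y = dot y y) by apply sqrt_sqrt, dot_self_nonneg.
  assert (Hr := vnorm_pos y Hy). assert (Hs := sqrt_vnorm_pos).
  unfold scaled_energy, scaled_a, scaled_b, energy.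
  replace ((angmom y u / sqrt (vnorm y)) ^ 2 + (dot y u / sqrt (vnorm y)) ^ 2)
    with ((angmom y u ^ 2 + dot y u ^ 2) / (sqrt (vnorm y) * sqrt (vnorm y)))
    by (field; lra).
  rewrite lagrange_identity, sqrt_vnorm_sq, <- Hrr. field. lra.
Qed.

Lemma angmom_sq_at (u : vec) : angmom y u ^ 2 = vnorm y * scaled_a y u ^ 2.
Proof.
  assert (Hs := sqrt_vnorm_pos).
  unfold scaled_a. rewrite <- sqrt_vnorm_sq at 1. field. lra.
Qed.

Section Pair.

Variables (m n : R) (u1 u2 : vec).
Let a1 := scaled_a y u1.
Let b1 := scaled_b y u1.
Let a2 := scaled_a y u2.
Let b2 := scaled_b y u2.

Lemma pair_energy_at :
  pair_energy m n a1 b1 a2 b2 = vnorm y * (m * energy y u1 + n * energy y u2).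
Proof. unfold pair_energy, a1, b1, a2, b2. rewrite !scaled_energy_at. ring. Qed.

Lemma pair_EL2_at : pair_energy m n a1 b1 a2 b2 * pair_angmom m n a1 a2 ^ 2 =
  (m * energy y u1 + n * energy y u2) * (m * angmom y u1 + n * angmom y u2) ^ 2.
Proof.
  assert (Hs := sqrt_vnorm_pos).
  rewrite pair_energy_at. unfold pair_angmom, a1, a2, scaled_a.
  rewrite <- sqrt_vnorm_sq at 1. field. lra.
Qed.

End Pair.

End ScaledCoordinates.

(** * The critical value *)

Definition sigma_profile (m n s : R) : R := 2 * n * ((s ^ 2 - 1) * (m + n * s) ^ 2).

Lemma sigma_profile_min (m n z s : R) : 0 < m -> 0 < n -> 0 <= z -> 0 <= s ->
  2 * n * z ^ 2 + m * z - n = 0 -> sigma_profile m n z <= sigma_profile m n s.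
Proof.
  intros Hm Hn Hz Hs Hroot. unfold sigma_profile.
  apply Rmult_le_compat_l; [lra |].
  set (c := m ^ 2 - n ^ 2 + 4 * m * n * z + 3 * n ^ 2 * z ^ 2).
  assert (Hdiff : (s ^ 2 - 1) * (m + n * s) ^ 2 - (z ^ 2 - 1) * (m + n * z) ^ 2 =
    (s - z) ^ 2 * (n ^ 2 * s ^ 2 + (2 * m * n + 2 * z * n ^ 2) * s + c)
    + ((2 * n * z + 2 * m) * s - 2 * n * z ^ 2 - 2 * m * z) * (2 * n * z ^ 2 + m * z - n))
    by (unfold c; ring).
  rewrite Hroot, Rmult_0_r, Rplus_0_r in Hdiff.
  assert (Hc : c = m ^ 2 + n ^ 2 / 2 + 5 / 2 * (m * n) * z).
  { transitivity (m ^ 2 + n ^ 2 / 2 + 5 / 2 * (m * n) * z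
      + 3 / 2 * n * (2 * n * z ^ 2 + m * z - n)); [unfold c; field | rewrite Hroot; ring]. }
  assert (0 <= c) by (rewrite Hc; assert (0 <= m * n * z) by (apply Rmult_le_pos; nra); nra).
  assert (0 <= n ^ 2 * s ^ 2 + (2 * m * n + 2 * z * n ^ 2) * s + c).
  { assert (0 <= n ^ 2 * s ^ 2) by nra.
    assert (0 <= (2 * m * n + 2 * z * n ^ 2) * s) by (apply Rmult_le_pos; nra). lra. }
  assert (0 <= (s - z) ^ 2) by apply pow2_ge_0.
  nra.
Qed.

Lemma sigma_crit_eq_profile (mu1 mu2 : R) : 0 < mu1 -> 0 < mu2 ->
  exists z, 0 <= z /\ 2 * mu2 * z ^ 2 + mu1 * z - mu2 = 0 /\
    sigma_crit mu1 mu2 = sigma_profile mu1 mu2 z.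
Proof.
  intros H1 H2. unfold sigma_crit, e_crit, sigma_profile.
  set (r := mu1 / mu2).
  assert (Hr : 0 < r) by (unfold r; apply Rdiv_lt_0_compat; lra).
  assert (Hm1 : mu1 = r * mu2) by (unfold r; field; lra).
  set (S := sqrt (r ^ 4 + 8 * r ^ 2)).
  assert (HS2 : S * S = r ^ 4 + 8 * r ^ 2) by (apply sqrt_sqrt; nra).
  assert (HS0 : 0 <= S) by apply sqrt_pos.
  set (e := (S - r ^ 2) / 4).
  assert (He : 0 < e) by (unfold e; nra).
  assert (Ce : 2 * e ^ 2 + e * r ^ 2 - r ^ 2 = 0) by (unfold e; nra).
  (* The critical point of [sigma_profile mu1 mu2] is [e / r]. *)
  set (z := e / r).
  assert (Hez : e = r * z) by (unfold z; field; lra).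
  assert (Hz : 0 < z) by (unfold z; apply Rdiv_lt_0_compat; lra).
  assert (Cz : 2 * z ^ 2 + r * z - 1 = 0).
  { apply (Rmult_eq_reg_l (r ^ 2)); [| apply pow_nonzero; lra].
    rewrite Rmult_0_r, <- Ce, Hez. ring. }
  exists z. split; [lra | split].
  - rewrite Hm1. replace (2 * mu2 * z ^ 2 + r * mu2 * z - mu2)
      with (mu2 * (2 * z ^ 2 + r * z - 1)) by ring. rewrite Cz. ring.
  - rewrite Hez, Hm1.
    transitivity (- (1 - (r * z) ^ 2) * mu2 ^ 3 * (r + z) ^ 2 / (2 * z ^ 2)); [field; lra |].
    replace ((r * z) ^ 2) with ((1 - 2 * z ^ 2) ^ 2) by (f_equal; lra).
    field. lra.
Qed.

Lemma scaled_energy_ge (a b : R) : a ^ 2 / 2 - 1 <= scaled_energy a b.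
Proof. unfold scaled_energy. assert (0 <= b ^ 2) by apply pow2_ge_0. lra. Qed.

Lemma pair_angmom_sq_le (m n a1 a2 : R) : 0 <= m -> 0 <= n ->
  pair_angmom m n a1 a2 ^ 2 <= (m * Rabs a1 + n * Rabs a2) ^ 2.
Proof.
  intros Hm Hn. rewrite <- pow2_abs. apply pow_incr. split; [apply Rabs_pos |].
  unfold pair_angmom. eapply Rle_trans; [apply Rabs_triang |].
  rewrite !Rabs_mult, (Rabs_pos_eq m), (Rabs_pos_eq n) by assumption. lra.
Qed.

Lemma weighted_le_of_sq_excess (m n X Y T k : R) :
  0 < m -> 0 < n -> 0 < k -> 0 <= X -> 0 <= Y -> 0 <= T <= k ->
  m * Rmax 0 (X ^ 2 - k * k) + n * Y ^ 2 <= n * T ^ 2 -> m * X + n * Y <= m * k + n * T.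
Proof.
  intros Hm Hn Hk HX HY HT Hsq.
  assert (HYT : Y <= T).
  { assert (0 <= m * Rmax 0 (X ^ 2 - k * k)) by (apply Rmult_le_pos; [lra | apply Rmax_l]).
    assert (Y ^ 2 <= T ^ 2) by (apply (Rmult_le_reg_l n); lra).
    apply Rsqr_incr_0_var; [rewrite !Rsqr_pow2 |]; lra. }
  destruct (Rle_dec X k) as [HXk | HXk]; [nra |].
  rewrite Rmax_right in Hsq by (simpl; nra).
  assert (Hd : m * (X - k) * (X + k) <= n * (T - Y) * (T + Y)).
  { replace (m * (X - k) * (X + k)) with (m * (X ^ 2 - k * k)) by ring.
    replace (n * (T - Y) * (T + Y)) with (n * T ^ 2 - n * Y ^ 2) by ring. lra. }
  assert (m * (X - k) * (2 * k) <= m * (X - k) * (X + k)) by (apply Rmult_le_compat_l; nra).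
  assert (n * (T - Y) * (T + Y) <= n * (T - Y) * (2 * k)) by (apply Rmult_le_compat_l; nra).
  assert (m * (X - k) <= n * (T - Y)) by (apply (Rmult_le_reg_r (2 * k)); nra).
  lra.
Qed.

Lemma profile_le_of_unbound (m n a1 b1 a2 b2 : R) : 0 < m -> 0 < n ->
  0 <= scaled_energy a1 b1 -> pair_energy m n a1 b1 a2 b2 < 0 ->
  exists s, 0 <= s <= 1 /\
    sigma_profile m n s <= pair_energy m n a1 b1 a2 b2 * pair_angmom m n a1 a2 ^ 2.
Proof.
  intros Hm Hn H1 HE.
  set (E := pair_energy m n a1 b1 a2 b2) in *.
  set (X := Rabs a1). set (Y := Rabs a2).
  assert (HX : 0 <= X) by apply Rabs_pos. assert (HY : 0 <= Y) by apply Rabs_pos.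
  assert (HX2 : X ^ 2 = a1 ^ 2) by apply pow2_abs.
  assert (HY2 : Y ^ 2 = a2 ^ 2) by apply pow2_abs.
  assert (HE1 := scaled_energy_ge a1 b1). assert (HE2 := scaled_energy_ge a2 b2).
  (* The largest s allowed by the energy: n (s^2 - 1) = E. *)
  assert (HEn : 0 <= 1 + E / n).
  { replace (1 + E / n) with ((n + E) * / n) by (field; lra).
    apply Rmult_le_pos; [unfold E, pair_energy; nra | apply Rlt_le, Rinv_0_lt_compat; lra]. }
  set (s := sqrt (1 + E / n)).
  assert (Hs0 : 0 <= s) by apply sqrt_pos.
  assert (Hss : s * s = 1 + E / n) by (apply sqrt_sqrt; exact HEn).
  assert (HEs : E = n * (s ^ 2 - 1)) by (simpl; rewrite Rmult_1_r, Hss; field; lra).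
  assert (Hs1 : s < 1).
  { assert (s ^ 2 - 1 < 0) by (apply (Rmult_lt_reg_l n); lra). nra. }
  set (k := sqrt 2).
  assert (Hk0 : 0 < k) by (apply sqrt_lt_R0; lra).
  assert (Hkk : k * k = 2) by (apply sqrt_sqrt; lra).
  set (T := k * s).
  assert (HXY : m * X + n * Y <= m * k + n * T).
  { apply weighted_le_of_sq_excess; try lra; unfold T; try nra.
    assert (n * (k * s) ^ 2 = 2 * (n + E)) by (rewrite HEs; simpl; nra).
    rewrite Hkk. unfold E, pair_energy in *. unfold Rmax.
    destruct (Rle_dec 0 (X ^ 2 - 2)); nra. }
  exists s. split; [lra |].
  assert (HL : pair_angmom m n a1 a2 ^ 2 <= 2 * (m + n * s) ^ 2).
  { eapply Rle_trans; [apply pair_angmom_sq_le; lra |]. fold X Y.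
    apply Rle_trans with ((m * k + n * T) ^ 2).
    { apply pow_incr. split; [| exact HXY].
      apply Rplus_le_le_0_compat; apply Rmult_le_pos; lra. }
    right. unfold T. rewrite <- Hkk. ring. }
  unfold sigma_profile.
  replace (2 * n * ((s ^ 2 - 1) * (m + n * s) ^ 2)) with (E * (2 * (m + n * s) ^ 2))
    by (rewrite HEs; ring).
  apply Rmult_le_compat_neg_l; lra.
Qed.

Lemma pair_energy_swap (m n a1 b1 a2 b2 : R) :
  pair_energy n m a2 b2 a1 b1 = pair_energy m n a1 b1 a2 b2.
Proof. unfold pair_energy. ring. Qed.

Lemma pair_angmom_swap (m n a1 a2 : R) : pair_angmom n m a2 a1 = pair_angmom m n a1 a2.
Proof. unfold pair_angmom. ring. Qed.

Lemma radial_pair_bound (m n b1 a2 b2 : R) : 0 < m -> 0 < n -> m + n = 1 ->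
  - n / 2 <= pair_energy m n 0 b1 a2 b2 * pair_angmom m n 0 a2 ^ 2.
Proof.
  intros Hm Hn Hmn.
  assert (Hlow : n * a2 ^ 2 / 2 - 1 <= pair_energy m n 0 b1 a2 b2).
  { unfold pair_energy, scaled_energy.
    assert (0 <= b1 ^ 2) by apply pow2_ge_0. assert (0 <= b2 ^ 2) by apply pow2_ge_0. nra. }
  replace (pair_angmom m n 0 a2 ^ 2) with (n ^ 2 * a2 ^ 2) by (unfold pair_angmom; ring).
  assert (0 <= n ^ 2 * a2 ^ 2) by nra.
  apply Rle_trans with ((n * a2 ^ 2 / 2 - 1) * (n ^ 2 * a2 ^ 2));
    [| apply Rmult_le_compat_r; assumption].
  assert (0 <= n / 2 * (n * a2 ^ 2 - 1) ^ 2) by (apply Rmult_le_pos; [lra | apply pow2_ge_0]).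
  assert ((n * a2 ^ 2 / 2 - 1) * (n ^ 2 * a2 ^ 2) = n / 2 * (n * a2 ^ 2 - 1) ^ 2 - n / 2)
    by field.
  lra.
Qed.

Section CriticalValue.

Variables mu1 mu2 : R.
Hypotheses (H1 : 0 < mu1) (H2 : 0 < mu2) (H12 : mu1 + mu2 = 1).

Lemma sigma_crit_le_profile s : 0 <= s -> sigma_crit mu1 mu2 <= sigma_profile mu1 mu2 s.
Proof.
  intros Hs. destruct (sigma_crit_eq_profile mu1 mu2 H1 H2) as (z & Hz & Hroot & ->).
  apply sigma_profile_min; assumption.
Qed.

Lemma sigma_crit_le_neg_half : sigma_crit mu1 mu2 <= - mu2 / 2.
Proof.
  set (k := sqrt 2).
  assert (Hkk : k * k = 2) by (apply sqrt_sqrt; lra).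
  assert (Hk : 0 < k) by (apply sqrt_lt_R0; lra).
  assert (Hinv : / k = k / 2) by (field_simplify_eq; lra).
  eapply Rle_trans; [apply (sigma_crit_le_profile (/ k)); rewrite Hinv; lra |].
  unfold sigma_profile. rewrite Hinv.
  replace ((k / 2) ^ 2) with (/ 2) by (simpl; field_simplify_eq; lra).
  assert (Hb : k / 2 <= mu1 + mu2 * (k / 2)) by nra.
  assert (Hb2 : (k / 2) ^ 2 <= (mu1 + mu2 * (k / 2)) ^ 2) by (apply pow_incr; nra).
  replace ((k / 2) ^ 2) with (/ 2) in Hb2 by (simpl; field_simplify_eq; lra).
  nra.
Qed.

Hypothesis Hle : mu1 <= mu2.

(* With t := 1 - mu1 (1 - s) / mu2 we get mu1 + mu2 t = mu2 + mu1 s and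
   mu2 (1 - t^2) >= mu1 (1 - s^2), so the swapped profile at s dominates the profile at t. *)
Lemma sigma_crit_le_profile_swap s : 0 <= s <= 1 ->
  sigma_crit mu1 mu2 <= sigma_profile mu2 mu1 s.
Proof.
  intros Hs.
  set (t := 1 - mu1 * (1 - s) / mu2).
  assert (Hd : 0 <= mu1 * (1 - s) / mu2 <= 1 - s).
  { split; [apply Rmult_le_pos; [nra | apply Rlt_le, Rinv_0_lt_compat; lra] |].
    apply (Rmult_le_reg_r mu2); [lra |]. field_simplify; nra. }
  eapply Rle_trans; [apply (sigma_crit_le_profile t); unfold t; lra |].
  unfold sigma_profile.
  assert (E1 : mu1 + mu2 * t = mu2 + mu1 * s) by (unfold t; field; lra).
  assert (E2 : mu2 * (1 - t) = mu1 * (1 - s)) by (unfold t; field; lra).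
  rewrite E1.
  assert (E3 : mu1 * (1 - s ^ 2) <= mu2 * (1 - t ^ 2)).
  { replace (mu2 * (1 - t ^ 2)) with (mu2 * (1 - t) * (1 + t)) by ring. rewrite E2.
    replace (mu1 * (1 - s ^ 2)) with (mu1 * (1 - s) * (1 + s)) by ring.
    apply Rmult_le_compat_l; [nra | unfold t; lra]. }
  assert (0 <= (mu2 + mu1 * s) ^ 2) by apply pow2_ge_0.
  nra.
Qed.

Lemma sigma_crit_le_of_nonneg_energy (E L : R) : 0 <= E -> sigma_crit mu1 mu2 <= E * L ^ 2.
Proof.
  intros HE. assert (sigma_crit mu1 mu2 <= - mu2 / 2) by (apply sigma_crit_le_neg_half; assumption).
  assert (0 <= E * L ^ 2) by (apply Rmult_le_pos; [assumption | apply pow2_ge_0]). lra.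
Qed.

Lemma sigma_crit_le_unbound1 (a1 b1 a2 b2 : R) : 0 <= scaled_energy a1 b1 ->
  sigma_crit mu1 mu2 <= pair_energy mu1 mu2 a1 b1 a2 b2 * pair_angmom mu1 mu2 a1 a2 ^ 2.
Proof.
  intros Hu. destruct (Rlt_dec (pair_energy mu1 mu2 a1 b1 a2 b2) 0) as [HE | HE];
    [| apply sigma_crit_le_of_nonneg_energy; lra].
  destruct (profile_le_of_unbound mu1 mu2 a1 b1 a2 b2) as (s & Hs & Hp); try assumption.
  apply Rle_trans with (sigma_profile mu1 mu2 s); [apply sigma_crit_le_profile |]; lra.
Qed.

Lemma sigma_crit_le_unbound2 (a1 b1 a2 b2 : R) : 0 <= scaled_energy a2 b2 ->
  sigma_crit mu1 mu2 <= pair_energy mu1 mu2 a1 b1 a2 b2 * pair_angmom mu1 mu2 a1 a2 ^ 2.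
Proof.
  intros Hu. destruct (Rlt_dec (pair_energy mu1 mu2 a1 b1 a2 b2) 0) as [HE | HE];
    [| apply sigma_crit_le_of_nonneg_energy; lra].
  rewrite <- pair_energy_swap, <- pair_angmom_swap in *.
  destruct (profile_le_of_unbound mu2 mu1 a2 b2 a1 b1) as (s & Hs & Hp); try assumption.
  apply Rle_trans with (sigma_profile mu2 mu1 s); [apply sigma_crit_le_profile_swap |]; lra.
Qed.

Lemma sigma_crit_le_radial1 (b1 a2 b2 : R) :
  sigma_crit mu1 mu2 <= pair_energy mu1 mu2 0 b1 a2 b2 * pair_angmom mu1 mu2 0 a2 ^ 2.
Proof.
  eapply Rle_trans; [apply sigma_crit_le_neg_half; assumption |].
  apply radial_pair_bound; assumption.
Qed.

Lemma sigma_crit_le_radial2 (a1 b1 b2 : R) :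
  sigma_crit mu1 mu2 <= pair_energy mu1 mu2 a1 b1 0 b2 * pair_angmom mu1 mu2 a1 0 ^ 2.
Proof.
  rewrite <- pair_energy_swap, <- pair_angmom_swap.
  assert (sigma_crit mu1 mu2 <= - mu2 / 2) by (apply sigma_crit_le_neg_half; assumption).
  assert (- mu1 / 2 <= pair_energy mu2 mu1 0 b2 a1 b1 * pair_angmom mu2 mu1 0 a1 ^ 2)
    by (apply radial_pair_bound; lra).
  lra.
Qed.

End CriticalValue.

(** * Quantitative binding *)

Lemma pair_energy_ge (m n a1 b1 a2 b2 : R) : 0 <= m -> 0 <= n -> m + n = 1 ->
  -1 <= pair_energy m n a1 b1 a2 b2.
Proof.
  intros Hm Hn Hmn. unfold pair_energy, scaled_energy.
  assert (0 <= a1 ^ 2 + b1 ^ 2) by nra. assert (0 <= a2 ^ 2 + b2 ^ 2) by nra. nra.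
Qed.

Lemma pair_angmom_sq_lt_2 (m n a1 b1 a2 b2 : R) : 0 < m -> 0 < n -> m + n = 1 ->
  pair_energy m n a1 b1 a2 b2 < 0 -> pair_angmom m n a1 a2 ^ 2 < 2.
Proof.
  intros Hm Hn Hmn HE. unfold pair_energy, scaled_energy, pair_angmom in *.
  assert (HL : (m * a1 + n * a2) ^ 2 = m * a1 ^ 2 + n * a2 ^ 2 - m * n * (a1 - a2) ^ 2)
    by (replace n with (1 - m) by lra; ring).
  assert (0 <= m * n * (a1 - a2) ^ 2) by (apply Rmult_le_pos; [nra | apply pow2_ge_0]).
  nra.
Qed.

Section BindingMargin.

Variables m n S g : R.
Hypotheses (Hm : 0 < m) (Hn : 0 < n) (Hmn : m + n = 1) (Hg : 0 < g).
Hypothesis unbound_bound : forall a1 b1 a2 b2, 0 <= scaled_energy a1 b1 ->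
  S <= pair_energy m n a1 b1 a2 b2 * pair_angmom m n a1 a2 ^ 2.
Hypothesis radial_bound : forall b1 a2 b2,
  S <= pair_energy m n 0 b1 a2 b2 * pair_angmom m n 0 a2 ^ 2.

Variables a1 b1 a2 b2 : R.
Let E := pair_energy m n a1 b1 a2 b2.
Let L := pair_angmom m n a1 a2.
Hypothesis HE : E < 0.

(* Raising b1 until particle 1 is unbound costs at most g/2 in E L^2. *)
Lemma near_unbound_bound : - (g / 4) <= scaled_energy a1 b1 -> S - g / 2 <= E * L ^ 2.
Proof.
  intros HE1.
  destruct (Rle_dec 0 (scaled_energy a1 b1)) as [Hu | Hb].
  { assert (HS := unbound_bound a1 b1 a2 b2 Hu). fold E L in HS. lra. }
  apply Rnot_le_lt in Hb.
  assert (Ha1 : 0 <= 2 - a1 ^ 2)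
    by (unfold scaled_energy in Hb; assert (0 <= b1 ^ 2) by apply pow2_ge_0; lra).
  set (b1' := sqrt (2 - a1 ^ 2)).
  assert (Hb1' : b1' ^ 2 = 2 - a1 ^ 2)
    by (unfold b1'; rewrite <- Rsqr_pow2; apply Rsqr_sqrt; exact Ha1).
  assert (Hu : scaled_energy a1 b1' = 0) by (unfold scaled_energy; rewrite Hb1'; field).
  assert (HE' : pair_energy m n a1 b1' a2 b2 = E - m * scaled_energy a1 b1)
    by (unfold E, pair_energy; rewrite Hu; ring).
  assert (HS := unbound_bound a1 b1' a2 b2 ltac:(lra)).
  rewrite HE' in HS. fold L in HS.
  assert (HL2 : L ^ 2 < 2) by (apply (pair_angmom_sq_lt_2 m n a1 b1 a2 b2); assumption).
  assert (0 <= L ^ 2) by apply pow2_ge_0.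
  assert (- (m * scaled_energy a1 b1) <= g / 4) by nra.
  assert (- (m * scaled_energy a1 b1) * L ^ 2 <= g / 4 * 2) by (apply Rmult_le_compat; nra).
  nra.
Qed.

(* Setting a1 to 0 lowers E and moves L by m a1, so E L^2 changes by at most g/5. *)
Lemma near_radial_bound : a1 ^ 2 <= (g / 20) ^ 2 -> S - g / 5 <= E * L ^ 2.
Proof.
  intros Ha1.
  assert (HS := radial_bound b1 a2 b2).
  replace (pair_energy m n 0 b1 a2 b2) with (E - m * a1 ^ 2 / 2) in HS
    by (unfold E, pair_energy, scaled_energy; field).
  replace (pair_angmom m n 0 a2) with (L - m * a1) in HS
    by (unfold L, pair_angmom; ring).
  assert (HEl : -1 <= E) by (apply pair_energy_ge; lra).
  assert (HL : Rabs L <= 2).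
  { assert (L ^ 2 < 2) by (apply (pair_angmom_sq_lt_2 m n a1 b1 a2 b2); assumption).
    replace 2 with (Rabs 2) by (apply Rabs_pos_eq; lra).
    apply Rsqr_le_abs_0. rewrite !Rsqr_pow2. lra. }
  assert (Ha : Rabs a1 <= g / 20).
  { rewrite <- (Rabs_pos_eq (g / 20)) by lra.
    apply Rsqr_le_abs_0. rewrite !Rsqr_pow2. lra. }
  assert (Hcross : Rabs (E * L * m * a1) <= 1 * 2 * 1 * (g / 20)).
  { rewrite !Rabs_mult, (Rabs_left E), (Rabs_pos_eq m) by lra.
    assert (0 <= Rabs L) by apply Rabs_pos. assert (0 <= Rabs a1) by apply Rabs_pos.
    repeat apply Rmult_le_compat; try (repeat apply Rmult_le_pos); lra. }
  assert (Hlin : - (2 * E * L * m * a1) <= g / 5).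
  { assert (- (E * L * m * a1) <= Rabs (E * L * m * a1)) by
      (rewrite <- Rabs_Ropp; apply Rle_abs). lra. }
  assert (0 <= (L - m * a1) ^ 2) by apply pow2_ge_0.
  assert ((E - m * a1 ^ 2 / 2) * (L - m * a1) ^ 2 <= E * (L - m * a1) ^ 2)
    by (apply Rmult_le_compat_r; [assumption | nra]).
  assert (E * (m ^ 2 * a1 ^ 2) <= 0) by (assert (0 <= m ^ 2 * a1 ^ 2) by nra; nra).
  assert (E * (L - m * a1) ^ 2 = E * L ^ 2 + E * (m ^ 2 * a1 ^ 2) - 2 * E * L * m * a1)
    by ring.
  lra.
Qed.

Lemma binding_margin : E * L ^ 2 <= S - g -> scaled_energy a1 b1 * a1 ^ 2 <= - (g ^ 3 / 1600).
Proof.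
  intros HEL.
  destruct (Rle_dec (- (g / 4)) (scaled_energy a1 b1)) as [Hu | Hb].
  { assert (S - g / 2 <= E * L ^ 2) by (apply near_unbound_bound; assumption). lra. }
  apply Rnot_le_lt in Hb.
  destruct (Rle_dec ((g / 20) ^ 2) (a1 ^ 2)) as [Ha | Ha].
  - assert (scaled_energy a1 b1 * a1 ^ 2 <= - (g / 4) * a1 ^ 2)
      by (apply Rmult_le_compat_r; [apply pow2_ge_0 | lra]).
    assert (- (g / 4) * a1 ^ 2 <= - (g / 4) * (g / 20) ^ 2)
      by (apply Rmult_le_compat_neg_l; lra).
    replace (- (g ^ 3 / 1600)) with (- (g / 4) * (g / 20) ^ 2) by field. lra.
  - assert (S - g / 5 <= E * L ^ 2) by (apply near_radial_bound; lra). lra.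
Qed.

End BindingMargin.

Lemma scaled_binding (mu1 mu2 K a1 b1 a2 b2 : R) :
  0 < mu1 -> 0 < mu2 -> mu1 + mu2 = 1 -> mu1 <= mu2 -> K < sigma_crit mu1 mu2 ->
  pair_energy mu1 mu2 a1 b1 a2 b2 < 0 ->
  pair_energy mu1 mu2 a1 b1 a2 b2 * pair_angmom mu1 mu2 a1 a2 ^ 2 <= K ->
  scaled_energy a1 b1 * a1 ^ 2 <= - ((sigma_crit mu1 mu2 - K) ^ 3 / 1600) /\
  scaled_energy a2 b2 * a2 ^ 2 <= - ((sigma_crit mu1 mu2 - K) ^ 3 / 1600).
Proof.
  intros H1 H2 H12 Hle HK HE HEL. split.
  - apply (binding_margin mu1 mu2 (sigma_crit mu1 mu2)) with (a2 := a2) (b2 := b2);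
      try assumption; try lra.
    + intros c1 d1 c2 d2. apply sigma_crit_le_unbound1; assumption.
    + intros d1 c2 d2. apply sigma_crit_le_radial1; assumption.
  - rewrite <- pair_energy_swap, <- pair_angmom_swap in *.
    apply (binding_margin mu2 mu1 (sigma_crit mu1 mu2)) with (a2 := a1) (b2 := b1);
      try assumption; try lra.
    + intros c1 d1 c2 d2 Hu. rewrite pair_energy_swap, pair_angmom_swap.
      apply sigma_crit_le_unbound2; assumption.
    + intros d1 c2 d2. rewrite pair_energy_swap, pair_angmom_swap.
      apply sigma_crit_le_radial2; assumption.
Qed.

Lemma particle_bounds (y u : vec) (E0 d : R) : y <> (0, 0) -> E0 < 0 -> 0 < d ->
  vnorm y * (- E0) <= 1 ->
  scaled_energy (scaled_a y u) (scaled_b y u) * scaled_a y u ^ 2 <= - d ->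
  energy y u * angmom y u ^ 2 <= - d /\ angmom y u ^ 2 <= 2 / (- E0).
Proof.
  intros Hy HE0 Hd Hr Hb.
  set (a := scaled_a y u) in *. set (b := scaled_b y u) in *.
  assert (Hr0 := vnorm_pos y Hy).
  assert (Hprod : energy y u * angmom y u ^ 2 = scaled_energy a b * a ^ 2).
  { unfold a, b. rewrite scaled_energy_at, angmom_sq_at by assumption. ring. }
  split; [lra |].
  assert (Ha : a ^ 2 < 2).
  { assert (0 <= a ^ 2) by apply pow2_ge_0. assert (0 <= b ^ 2) by apply pow2_ge_0.
    unfold scaled_energy in Hb. nra. }
  rewrite angmom_sq_at by assumption. fold a.
  apply (Rmult_le_reg_r (- E0)); [lra |].
  replace (2 / - E0 * - E0) with 2 by (field; lra).
  assert (0 <= a ^ 2) by apply pow2_ge_0. nra.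
Qed.

Lemma binding_at_point (mu1 mu2 E0 K : R) (y u1 u2 : vec) :
  0 < mu1 -> 0 < mu2 -> mu1 + mu2 = 1 -> mu1 <= mu2 -> y <> (0, 0) -> E0 < 0 ->
  K < sigma_crit mu1 mu2 ->
  mu1 * energy y u1 + mu2 * energy y u2 <= E0 ->
  (mu1 * energy y u1 + mu2 * energy y u2) * (mu1 * angmom y u1 + mu2 * angmom y u2) ^ 2 <= K ->
  let d := (sigma_crit mu1 mu2 - K) ^ 3 / 1600 in
  (energy y u1 * angmom y u1 ^ 2 <= - d /\ angmom y u1 ^ 2 <= 2 / (- E0)) /\
  (energy y u2 * angmom y u2 ^ 2 <= - d /\ angmom y u2 ^ 2 <= 2 / (- E0)).
Proof.
  intros H1 H2 H12 Hle Hy HE0 HK HE HEL d.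
  assert (Hd : 0 < d) by (apply Rdiv_lt_0_compat; [apply pow_lt |]; lra).
  assert (Hr := vnorm_pos y Hy).
  assert (Hpair := pair_energy_at y Hy mu1 mu2 u1 u2).
  assert (Hlow := pair_energy_ge mu1 mu2 (scaled_a y u1) (scaled_b y u1)
    (scaled_a y u2) (scaled_b y u2) ltac:(lra) ltac:(lra) H12).
  assert (HrE : vnorm y * (- E0) <= 1) by nra.
  destruct (scaled_binding mu1 mu2 K (scaled_a y u1) (scaled_b y u1)
    (scaled_a y u2) (scaled_b y u2)) as [B1 B2]; try assumption.
  - rewrite Hpair. nra.
  - rewrite pair_EL2_at by assumption. exact HEL.
  - split; apply (particle_bounds y _ E0 d); assumption.
Qed.

Lemma reachable_bounds (mu1 mu2 eps : R) (s0 s : state) :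
  0 < mu1 -> 0 < mu2 -> mu1 + mu2 = 1 -> mu1 <= mu2 -> 0 <= eps <= 1 / 2 ->
  orbits_intersect s0 -> Etot mu1 mu2 s0 < 0 ->
  Etot mu1 mu2 s0 * Ltot mu1 mu2 s0 ^ 2 < sigma_crit mu1 mu2 ->
  reachable mu1 mu2 eps s0 s ->
  let d := (sigma_crit mu1 mu2 - Etot mu1 mu2 s0 * Ltot mu1 mu2 s0 ^ 2) ^ 3 / 1600 in
  (En1 s * Lm1 s ^ 2 <= - d /\ Lm1 s ^ 2 <= 2 / (- Etot mu1 mu2 s0)) /\
  (En2 s * Lm2 s ^ 2 <= - d /\ Lm2 s ^ 2 <= 2 / (- Etot mu1 mu2 s0)).
Proof.
  intros H1 H2 H12 Hle Heps Hint HE0 HK Hs.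
  destruct (reachable_invariants mu1 mu2 eps H1 H2 H12 Heps s0 s Hint Hs)
    as (HE & HL & y & u1 & u2 & Hy & E1 & E2 & L1 & L2).
  unfold Etot, Ltot in HE, HL. rewrite E1, E2, L1, L2 in *.
  apply binding_at_point; try assumption.
  rewrite HL. apply Rmult_le_compat_r; [apply pow2_ge_0 | exact HE].
Qed.

Lemma orbit_bounds_of_binding (E L d B : R) : 0 < d -> E * L ^ 2 <= - d -> L ^ 2 <= B ->
  E < 0 /\ Rabs L <= sqrt B /\ sqrt (1 + 2 * E * L ^ 2) <= sqrt (1 - 2 * d).
Proof.
  intros Hd HEL HL. assert (0 <= L ^ 2) by apply pow2_ge_0.
  split; [| split].
  - destruct (Rlt_dec E 0) as [| HE]; [assumption |].
    assert (0 <= E * L ^ 2) by (apply Rmult_le_pos; lra). lra.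
  - rewrite <- sqrt_Rsqr_abs. apply sqrt_le_1_alt. rewrite Rsqr_pow2. exact HL.
  - apply sqrt_le_1_alt. lra.
Qed.

Lemma sqrt_lt_1_of_lt (x : R) : x < 1 -> sqrt x < 1.
Proof.
  intros Hx. destruct (Rle_dec x 0) as [Hn | Hp].
  - rewrite sqrt_neg_0 by exact Hn. lra.
  - rewrite <- sqrt_1. apply sqrt_lt_1_alt. lra.
Qed.

Theorem theorem1 (mu1 mu2 eps : R) (s0 : state) :
  0 < mu1 -> 0 < mu2 -> mu1 + mu2 = 1 -> mu1 <= mu2 ->
  0 <= eps <= 1 / 2 ->
  x1 s0 <> (0, 0) -> x2 s0 <> (0, 0) ->
  En1 s0 < 0 -> En2 s0 < 0 ->
  orbits_intersect s0 ->
  Etot mu1 mu2 s0 < 0 ->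
  Etot mu1 mu2 s0 * (Ltot mu1 mu2 s0) ^ 2 < sigma_crit mu1 mu2 ->
  exists (B c1 c2 : R), c1 < 1 /\ c2 < 1 /\
    forall s, reachable mu1 mu2 eps s0 s ->
      En1 s < 0 /\ En2 s < 0 /\
      Rabs (Lm1 s) <= B /\ Rabs (Lm2 s) <= B /\
      ecc1 s <= c1 /\ ecc2 s <= c2.
Proof.
  (* The hypotheses on the initial orbits follow from [orbits_intersect s0] and the rest. *)
  intros H1 H2 H12 Hle Heps _ _ _ _ Hint HE0 HK.
  set (d := (sigma_crit mu1 mu2 - Etot mu1 mu2 s0 * Ltot mu1 mu2 s0 ^ 2) ^ 3 / 1600).
  assert (Hd : 0 < d) by (apply Rdiv_lt_0_compat; [apply pow_lt |]; lra).
  set (c := sqrt (1 - 2 * d)).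
  assert (Hc : c < 1) by (apply sqrt_lt_1_of_lt; lra).
  exists (sqrt (2 / - Etot mu1 mu2 s0)), c, c.
  split; [exact Hc | split; [exact Hc |]].
  intros s Hs.
  destruct (reachable_bounds mu1 mu2 eps s0 s H1 H2 H12 Hle Heps Hint HE0 HK Hs)
    as ((B1 & D1) & (B2 & D2)).
  destruct (orbit_bounds_of_binding _ _ d _ Hd B1 D1) as (N1 & A1 & C1).
  destruct (orbit_bounds_of_binding _ _ d _ Hd B2 D2) as (N2 & A2 & C2).
  unfold ecc1, ecc2, ecc. repeat split; assumption.
Qed.
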